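(* If an unrestricted tree-to-tree Hennie machine $\mathcal{H}$ is narrow-visit on all inputs, then it is a tree-to-tree Hennie machine and $[\![\mathcal{H}]\!]$ has linear height increase: there are constants $c,d$ such that $\mathrm{height}([\![\mathcal{H}]\!](t))\le c\,\mathrm{height}(t)+d$ for every $t$ in its domain.
   Context: Trees: ranked alphabets are finite sets with a rank function to $\mathbb{N}$; $T_\Sigma$ is the set of finite ordered $\Sigma$-labeled trees where a node labeled $\sigma$ has $\mathrm{rank}(\sigma)$ children (nodes are words over positive integers, root $\varepsilon$, $i$-th child of $u$ is $ui$); $T_\Sigma[Y]$ allows extra rank-$0$ leaves labeled in $Y$. $\mathrm{height}(t)$ is the maximal number of edges on a root-to-leaf path. The ancestor order on nodes is the prefix order; an antichain is a set of pairwise incomparable nodes. Hennie machines: a uTHM is $(Q,M,\top,\Sigma,\Gamma,q_{init},\delta)$ with finite states $Q$, finite memory symbols $M\ni\top$, $q_{init}\in Q$, partial $\delta:Q\times\Sigma\times M\rightharpoonup T_\Gamma[Q\times M\times D]$, $D=\{\uparrow,1,..,\max\mathrm{rank}\Sigma\}$, leaves $(q',m',d)$ of $\delta(q,\sigma,m)$ having $d\in\{\uparrow,1,..,\mathrm{rank}\sigma\}$. Configurations on $t$ are $(u,q,\mu)$, $\mu:$ nodes$\to M$, initially $(\varepsilon,q_{init},\text{constant }\top)$; the step of $(u,q,\mu)$ is $\delta(q,\mathrm{lab}_t(u),\mu(u))$ with each leaf $(q',m',d)$ replaced by $(ud,q',\mu[u\mapsto m'])$ ($ud$ the parent if $d=\uparrow$,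 else the $d$-th child; undefined if nonexistent). Confluent rewriting of configuration leaves by steps from the initial configuration yields the output $[\![\mathcal{H}]\!](t)\in T_\Gamma$, if any. A branch-outputting run is $C_0,..,C_n$ with $C_0$ initial and $C_{i+1}$ a leaf label of the step of $C_i$; its number of visits at a node set $S$ is $|\{i:\text{position of }C_i\in S\}|$. A THM is a uTHM for which some $N$ bounds visits at every single node, for all inputs and runs. A uTHM is narrow-visit on all inputs if some $N$ bounds the visits at every antichain $S$ of $t$, for all inputs $t$ and all runs on $t$. *)

From Stdlib Require Import List.
From mathcomp Require Import all_boot.
Set Implicit Arguments. Unset Strict Implicit. Unset Printing Implicit Defensive.

Inductive tree (A : Type) := Node of A & seq (tree A).
Arguments Node {A} _ _.

Fixpoint tmap (A B : Type) (f : A -> B) (t : tree A) : tree B :=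
  let: Node a ts := t in Node (f a) (map (tmap f) ts).

Fixpoint height (A : Type) (t : tree A) : nat :=
  let: Node _ ts := t in foldr maxn 0 (map (fun c => (height c).+1) ts).

Fixpoint wf_tree (A : Type) (rk : A -> nat) (t : tree A) : bool :=
  let: Node a ts := t in (size ts == rk a) && all (wf_tree rk) ts.

Fixpoint leaf_labels (A : Type) (t : tree A) : seq A :=
  let: Node a ts := t in
  if ts is [::] then [:: a] else flatten (map (@leaf_labels A) ts).

Fixpoint topt (A : Type) (t : tree (option A)) : option (tree A) :=
  let: Node oa ts := t in
  match oa with
  | None => None
  | Some a => let ots := map (@topt A) ts in
              if all (fun o : option (tree A) => o : bool) ots then Some (Node a (pmap id ots)) else None
  end.

(* Nodes are words over positive integers; root = [::], i-th child of u = rcons u i. *)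
Fixpoint subtree (A : Type) (t : tree A) (u : seq nat) : option (tree A) :=
  match u with
  | [::] => Some t
  | i :: u' =>
      let: Node _ ts := t in
      if i is i'.+1 then
        (if drop i' ts is c :: _ then subtree c u' else None)
      else None
  end.

Definition is_node (A : Type) (t : tree A) (u : seq nat) : bool := subtree t u.

Definition lab (A : Type) (t : tree A) (u : seq nat) : option A :=
  omap (fun s => let: Node a _ := s in a) (subtree t u).

Definition antichain (A : Type) (t : tree A) (S : pred (seq nat)) : Prop :=
  (forall u, S u -> is_node t u) /\
  (forall u v, S u -> S v -> prefix u v -> u = v).

(* Directions D: None = "up", Some i = i-th child (1-based). *)
Definition dir := option nat.

Record uTHM (Sig Gam : finType) := MkUTHM {
  Qs : finType;
  Ms : finType;
  top : Ms;
  qinit : Qs;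
  delta : Qs -> Sig -> Ms -> option (tree (Gam + (Qs * Ms * dir)))
}.

Section Semantics.
Variables (Sig Gam : finType) (rkS : Sig -> nat) (rkG : Gam -> nat).
Variable H : uTHM Sig Gam.

Local Notation Q := (Qs H).
Local Notation M := (Ms H).

Fixpoint wf_rhs (k : nat) (r : tree (Gam + (Q * M * dir))) : bool :=
  let: Node x ts := r in
  match x with
  | inl g => (size ts == rkG g) && all (wf_rhs k) ts
  | inr (_, _, d) => (if ts is [::] then true else false) &&
      (if d is Some i then (0 < i <= k) else true)
  end.

Definition uTHM_wf : Prop :=
  forall q s m r, @delta _ _ H q s m = Some r -> wf_rhs (rkS s) r.

Record config := Conf { pos : seq nat; st : Q; mem : seq nat -> M }.

Definition init_config : config := Conf [::] (qinit H) (fun _ => top H).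

Definition upd (mu : seq nat -> M) (u : seq nat) (m : M) : seq nat -> M :=
  fun v => if v == u then m else mu v.

Definition target (t : tree Sig) (u : seq nat) (d : dir) : option (seq nat) :=
  let v := match d with
           | None => if u is [::] then None else Some (take (size u).-1 u)
           | Some i => Some (rcons u i)
           end in
  match v with Some w => if is_node t w then Some w else None | None => None end.

Definition step (t : tree Sig) (C : config) : option (tree (Gam + config)) :=
  match lab t (pos C) with
  | None => None
  | Some s =>
    match @delta _ _ H (st C) s (mem C (pos C)) with
    | None => None
    | Some r0 =>
      topt (tmap (fun x : Gam + (Q * M * dir) =>
        match x with
        | inl g => Some (inl g)
        | inr (q', m', d) =>
            omap (fun v => inr (Conf v q' (upd (mem C) (pos C) m')))
                 (target t (pos C) d)
        end) r0)
    end
  end.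

Inductive rw1 (t : tree Sig) : tree (Gam + config) -> tree (Gam + config) -> Prop :=
| rw_leaf C r : step t C = Some r -> rw1 t (Node (inr C) [::]) r
| rw_ctx a l1 x y l2 : rw1 t x y ->
    rw1 t (Node a (l1 ++ x :: l2)) (Node a (l1 ++ y :: l2)).

Inductive rw_star (t : tree Sig) : tree (Gam + config) -> tree (Gam + config) -> Prop :=
| rws_refl x : rw_star t x x
| rws_step x y z : rw1 t x y -> rw_star t y z -> rw_star t x z.

Definition output (t : tree Sig) (s : tree Gam) : Prop :=
  rw_star t (Node (inr init_config) [::]) (tmap inl s).

Definition run (t : tree Sig) (cs : seq config) : Prop :=
  [/\ cs <> [::], head init_config cs = init_config &
      forall i, i.+1 < size cs ->
        exists r, step t (nth init_config cs i) = Some r /\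
                  In (inr (nth init_config cs i.+1)) (leaf_labels r)].

Definition visits (cs : seq config) (S : pred (seq nat)) : nat :=
  count (fun C => S (pos C)) cs.

Definition is_THM : Prop :=
  exists N, forall t, wf_tree rkS t -> forall cs, run t cs ->
    forall u, visits cs (pred1 u) <= N.

Definition narrow_visit : Prop :=
  exists N, forall t, wf_tree rkS t -> forall cs, run t cs ->
    forall S, antichain t S -> visits cs S <= N.

End Semantics.

From Pilot Require Import Defs.
From Stdlib Require Import List.
From mathcomp Require Import all_boot zify.
Set Implicit Arguments. Unset Strict Implicit. Unset Printing Implicit Defensive.

(** Let [N] witness narrow-visit. The nodes of a fixed depth form an antichain,
    so a run on [t] makes at most [N] visits at each depth and has length at most
    [N * (height t + 1)]; singleton antichains give the per-node bound of a
    Hennie machine. Let [K] bound the heights of the right-hand sides of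
    [delta]. Every configuration leaf of a tree reachable by rewriting is the last
    configuration of a branch-outputting run of length [n] and lies at depth at
    most [K * (n - 1)]; a step grafts a tree of height at most [K] at such a
    leaf, so every node of a reachable tree has depth at most [K] times the
    maximal run length, that is [K * N * (height t + 1)]. *)

Definition tree_In_ind (A : Type) (P : tree A -> Prop)
    (IH : forall a ts, (forall c, In c ts -> P c) -> P (Node a ts)) : forall t, P t :=
  fix F t := let: Node a ts := t in IH a ts
    ((fix G (l : seq (tree A)) : forall c, In c l -> P c :=
      match l with
      | [::] => fun c (h : In c [::]) => False_ind _ h
      | x :: l' => fun c (h : In c (x :: l')) =>
          match h with
          | or_introl e => eq_ind x P (F x) c e
          | or_intror h' => G l' c h'
          end
      end) ts).

Lemma foldr_maxn_le (T : Type) (f : T -> nat) l n :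
  (forall x, In x l -> f x <= n) -> foldr maxn 0 (map f l) <= n.
Proof.
elim: l => //= x l IHl le_n; rewrite geq_max le_n /=; last by left.
by apply: IHl => y yl; apply: le_n; right.
Qed.

Lemma leq_foldr_maxn (T : Type) (f : T -> nat) l x : In x l -> f x <= foldr maxn 0 (map f l).
Proof.
elim: l => //= y l IHl [<-|xl]; first exact: leq_maxl.
exact: leq_trans (IHl xl) (leq_maxr _ _).
Qed.

Lemma In_flatten_map (A B : Type) (g : A -> seq B) l y :
  In y (flatten (map g l)) <-> exists2 c, In c l & In y (g c).
Proof.
elim: l => /= [|c l IHl]; first by split=> // -[].
split.
- case/in_app_iff => [yc|/IHl [c' c'l yc']]; first by exists c; [left|].
  by exists c'; [right|].
- case=> c' [<-|c'l] yc'; apply/in_app_iff; first by left.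
  by right; apply/IHl; exists c'.
Qed.

Lemma In_drop (A : Type) n (l : seq A) c r : drop n l = c :: r -> In c l.
Proof.
elim: l n => [|x l IHl] [|n] //=; first by case=> -> _; left.
by move/IHl; right.
Qed.

Lemma height_tmap (A B : Type) (f : A -> B) t : height (tmap f t) = height t.
Proof.
elim/tree_In_ind: t => a ts IH /=; congr foldr.
elim: ts IH => //= c ts IHts IH; rewrite IH ?IHts //; last by left.
by move=> c' c'ts; apply: IH; right.
Qed.

Lemma In_pmap_topt (A : Type) (l : seq (tree (option A))) c' :
  In c' (pmap id (map (@topt A) l)) -> exists2 c, In c l & topt c = Some c'.
Proof.
elim: l => //= c l IHl.
case ec: (topt c) => [y|] /=; last by case/IHl=> c0; exists c0; [right|].
by case=> [<-|/IHl [c0 c0l e]]; [exists c; [left|]|exists c0; [right|]].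
Qed.

Lemma height_topt (A : Type) (t : tree (option A)) t' : topt t = Some t' -> height t' <= height t.
Proof.
elim/tree_In_ind: t t' => [[a|] ts IH] t' //=; case: ifP => // _ [<-] /=.
apply: foldr_maxn_le => c' /In_pmap_topt [c cts /(IH c cts)].
by rewrite -ltnS => /leq_trans; apply; apply: (leq_foldr_maxn (fun c => (height c).+1)).
Qed.

Lemma size_node_le_height (A : Type) (t : tree A) u : is_node t u -> size u <= height t.
Proof.
elim: u t => [|[|i] u IHu] [a ts] //; rewrite /is_node /=.
case ts_i: (drop i ts) => [|c r] // /IHu; rewrite -ltnS => /leq_trans; apply.
exact: (leq_foldr_maxn (fun c => (height c).+1) (In_drop ts_i)).
Qed.

Inductive tall (A : Type) (P : A -> Prop) : tree A -> Prop :=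
  TallNode a ts : P a -> (forall c, In c ts -> tall P c) -> tall P (Node a ts).

Lemma tall_nodeP (A : Type) (P : A -> Prop) a ts :
  tall P (Node a ts) <-> P a /\ forall c, In c ts -> tall P c.
Proof. by split=> [t_P|[]]; [inversion t_P|constructor]. Qed.

Lemma tall_tmap (A B : Type) (f : A -> B) (P : B -> Prop) t :
  (forall a, P (f a)) -> tall P (tmap f t).
Proof.
move=> Pf; elim/tree_In_ind: t => a ts IH /=; constructor => // c.
elim: ts IH => //= c0 ts IHts IH [<-|cts]; first by apply: IH; left.
by apply: IHts => // c1 c1ts; apply: IH; right.
Qed.

Lemma tall_topt (A : Type) (P : A -> Prop) t t' :
  tall (fun o => forall a, o = Some a -> P a) t -> topt t = Some t' -> tall P t'.
Proof.
elim/tree_In_ind: t t' => oa ts IH t' /tall_nodeP [Poa Pts].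
case: oa Poa => [a|] //= Pa; case: ifP => // _ [<-].
constructor; first exact: Pa.
by move=> c' /In_pmap_topt [c cts ec]; apply: IH cts _ (Pts _ cts) ec.
Qed.

Lemma tall_leaf_labels (A : Type) (P : A -> Prop) t a :
  tall P t -> In a (leaf_labels t) -> P a.
Proof.
elim/tree_In_ind: t => b ts IH /tall_nodeP [Pb Pts] /=.
case: ts IH Pts => [|c0 ts] IH Pts; first by case=> // <-.
by case/In_flatten_map=> c cts; apply: IH cts (Pts _ cts).
Qed.

Lemma count_ltn_le (T : Type) (f : T -> nat) N n s :
  (forall i, i < n -> count (fun x => f x == i) s <= N) ->
  count (fun x => f x < n) s <= n * N.
Proof.
elim: n => [|n IHn] le_N; first by rewrite count_pred0.
apply: leq_trans (_ : count (predU (fun x => f x < n) (fun x => f x == n)) s <= _).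
  by apply: sub_count => x /=; rewrite ltnS leq_eqVlt orbC.
apply: leq_trans (_ : count (fun x => f x < n) s + count (fun x => f x == n) s <= _).
  by rewrite -count_predUI leq_addr.
by rewrite mulSn addnC leq_add ?le_N ?IHn // => i /ltnW; apply: le_N.
Qed.

Lemma antichain_nodeI (A : Type) (t : tree A) (S : pred (seq nat)) :
  (forall u v, S u -> S v -> prefix u v -> u = v) ->
  antichain t (fun u => S u && is_node t u).
Proof. by move=> S_anti; split=> [u /andP[] //|u v /andP[Su _] /andP[Sv _]]; apply: S_anti. Qed.

Section Machine.
Variables (Sig Gam : finType) (H : uTHM Sig Gam).
Implicit Types (t : tree Sig) (C : config H) (cs : seq (config H)).

Definition rhs_height : nat := \max_(x : Qs H * Sig * Ms H)
  (if @delta _ _ H x.1.1 x.1.2 x.2 is Some r then height r else 0).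

Lemma height_step t C r : step t C = Some r -> height r <= rhs_height.
Proof.
rewrite /step; case: (lab t (pos C)) => [s|] //.
case e_r0: (delta _ _ _) => [r0|] // /height_topt; rewrite height_tmap => /leq_trans; apply.
by rewrite /rhs_height (bigD1 (st C, s, Defs.mem C (pos C))) //= e_r0 leq_maxl.
Qed.

Lemma step_targets_nodes t C r : step t C = Some r ->
  tall (fun b => if b is inr C' then is_node t (pos C') else True) r.
Proof.
rewrite /step; case: (lab t (pos C)) => [s|] //; case: (delta _ _ _) => [r0|] //.
apply: tall_topt; apply: tall_tmap => -[g|[[q' m'] d]] b /=; first by case=> <-.
rewrite /target; case: d => [i|]; last case: (pos C) => [|x u] //=;
  by case: ifP => // uv [<-].
Qed.

Lemma run_rcons t cs C r : run t cs -> step t (last (init_config H) cs) = Some r ->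
  In (inr C) (leaf_labels r) -> run t (rcons cs C).
Proof.
case=> cs_nil cs_head cs_step last_r Cr; split.
- by case: cs {cs_head cs_step last_r} cs_nil.
- by case: cs {cs_step last_r} cs_nil cs_head.
move=> i; rewrite size_rcons ltnS => lti; rewrite !nth_rcons lti.
case: (ltnP i.+1 (size cs)) => [|le_cs]; first exact: cs_step.
have i_last : i.+1 = size cs by apply/eqP; rewrite eqn_leq le_cs lti.
by rewrite i_last eqxx -[i]/(i.+1.-1) i_last nth_last; exists r.
Qed.

Lemma run_nodes t cs : run t cs -> all (fun C => is_node t (pos C)) cs.
Proof.
case=> cs_nil cs_head cs_step; apply/(all_nthP (init_config H)) => -[|i] lti.
  by case: cs cs_nil cs_head lti {cs_step} => //= C cs _ ->.
have [r [step_r Cr]] := cs_step i lti.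
exact: tall_leaf_labels (step_targets_nodes step_r) Cr.
Qed.

Lemma visits_nodeI t cs S : run t cs ->
  visits cs S = visits cs (fun u => S u && is_node t u).
Proof. by move/run_nodes/all_filterP=> cs_nodes; rewrite /visits -{1}cs_nodes count_filter. Qed.

Section NarrowVisit.
Variables (rkS : Sig -> nat) (N : nat).
Hypothesis narrow_N : forall t, wf_tree rkS t -> forall cs, run t cs ->
  forall S, antichain t S -> visits cs S <= N.

Lemma visits_node_le t cs u : wf_tree rkS t -> run t cs -> visits cs (pred1 u) <= N.
Proof.
move=> wft run_cs; rewrite (visits_nodeI _ run_cs); apply: (narrow_N wft run_cs).
by apply: antichain_nodeI => v w /eqP-> /eqP->.
Qed.

Lemma size_run_le t : wf_tree rkS t -> forall cs, run t cs -> size cs <= N * (height t).+1.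
Proof.
move=> wft cs run_cs.
have <- : count (fun C => size (pos C) < (height t).+1) cs = size cs.
  apply/eqP; rewrite -all_count; apply: sub_all (run_nodes run_cs) => C.
  by rewrite ltnS; apply: size_node_le_height.
rewrite mulnC; apply: count_ltn_le => n _.
rewrite -/(visits cs (fun u => size u == n)) (visits_nodeI _ run_cs).
apply: (narrow_N wft run_cs); apply: antichain_nodeI => u v /eqP size_u /eqP size_v.
by rewrite prefixE size_u -size_v take_size => /eqP.
Qed.

End NarrowVisit.

Section OutputHeight.
Variables (t : tree Sig) (B : nat).
Hypothesis runs_le_B : forall cs, run t cs -> size cs <= B.
Local Notation K := rhs_height.

(* A configuration node with children comes from an ill-formed right-hand side
   and is never rewritten, hence the condition [ts = [::]]. *)
Inductive run_bounded : nat -> tree (Gam + config H) -> Prop :=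
  RunBounded e a ts :
    e <= K * B ->
    (forall C, a = inr C -> ts = [::] ->
       exists2 cs, run t cs & last (init_config H) cs = C /\ e + K <= K * size cs) ->
    (forall c, In c ts -> run_bounded e.+1 c) ->
    run_bounded e (Node a ts).

Lemma run_bounded_nodeP e a ts : run_bounded e (Node a ts) <->
  [/\ e <= K * B,
      forall C, a = inr C -> ts = [::] ->
        exists2 cs, run t cs & last (init_config H) cs = C /\ e + K <= K * size cs
    & forall c, In c ts -> run_bounded e.+1 c].
Proof. by split=> [bnd|[]]; [inversion bnd|constructor]. Qed.

Lemma run_bounded_init : run_bounded 0 (Node (inr (init_config H)) [::]).
Proof.
constructor=> // C [<-] _; exists [:: init_config H]; last by rewrite muln1.
by split=> // -[].
Qed.

Lemma run_bounded_step_result cs e : run t cs -> e + K <= K * size cs ->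
  forall x j, j + height x <= K ->
  (forall C, In (inr C) (leaf_labels x) -> run t (rcons cs C)) -> run_bounded (e + j) x.
Proof.
move=> run_cs room x; elim/tree_In_ind: x => a ts IH j le_K next_run.
have le_KB : K * size cs <= K * B by rewrite leq_mul2l runs_le_B ?orbT.
constructor.
- by apply: leq_trans le_KB; lia.
- move=> C a_C ts_nil; rewrite {}a_C {}ts_nil in le_K next_run *.
  exists (rcons cs C); first by apply: next_run; left.
  by rewrite last_rcons size_rcons mulnS; split=> //; lia.
- move=> c cts; rewrite -addnS; apply: IH => // [|C Cc].
  + apply: leq_trans le_K; rewrite addSn -addnS leq_add2l.
    exact: (leq_foldr_maxn (fun c => (height c).+1) cts).
  + apply: next_run; case: ts cts {le_K} => // c0 ts cts.
    by apply/In_flatten_map; exists c.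
Qed.

Lemma run_bounded_rw1 x y : rw1 t x y -> forall e, run_bounded e x -> run_bounded e y.
Proof.
elim=> [C r step_r|a l1 x0 y0 l2 _ IH] e /run_bounded_nodeP [le_KB leaf_run sub_bnd].
- have [cs run_cs [last_C room]] := leaf_run C erefl erefl.
  rewrite -[e]addn0; apply: (run_bounded_step_result run_cs room).
    exact: height_step step_r.
  by move=> C' C'r; apply: run_rcons run_cs _ C'r; rewrite last_C.
- constructor=> // [C _|c]; first by case: l1 {leaf_run sub_bnd}.
  case/in_app_iff=> [c_l1|[<-|c_l2]].
  + by apply/sub_bnd/in_app_iff; left.
  + by apply/IH/sub_bnd/in_app_iff; right; left.
  + by apply/sub_bnd/in_app_iff; right; right.
Qed.

Lemma run_bounded_rw_star x y e : rw_star t x y -> run_bounded e x -> run_bounded e y.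
Proof. by elim=> // x0 y0 z0 /run_bounded_rw1 rw_x0 _ IH /rw_x0/IH. Qed.

Lemma height_run_bounded e x : run_bounded e x -> e + height x <= K * B.
Proof.
elim/tree_In_ind: x e => a ts IH e /run_bounded_nodeP [le_KB _ sub_bnd] /=.
rewrite -leq_subRL //; apply: foldr_maxn_le => c cts.
by have := IH c cts _ (sub_bnd c cts); lia.
Qed.

End OutputHeight.

End Machine.

Theorem mainTheorem15 (Sig : finType) (rkS : Sig -> nat)
  (Gam : finType) (rkG : Gam -> nat) (H : uTHM Sig Gam) :
  uTHM_wf rkS rkG H ->
  narrow_visit rkS H ->
  is_THM rkS H /\
  exists c d : nat, forall (t : tree Sig) (s : tree Gam),
    wf_tree rkS t -> output H t s -> height s <= c * height t + d.
Proof.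
move=> _ [N narrow_N]; split.
  exists N => t wft cs run_cs u; exact: (visits_node_le narrow_N u wft run_cs).
exists (rhs_height H * N), (rhs_height H * N) => t s wft out.
have := run_bounded_rw_star (size_run_le narrow_N wft) out (run_bounded_init _ _ _).
move/height_run_bounded; rewrite height_tmap add0n.
by rewrite mulnS mulnDr mulnA addnC.
Qed.
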